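(* Let $G$ be a finite graph and $H=(H_{ij})$ a matrix indexed by its vertices with $H_{ij}\ge0$, $H_{ij}=0$ unless $\langle ij\rangle$ is an edge, and $H_{ij}\le h$ for all edges. Suppose every vertex has degree at most $\lambda$. Let $G_{ij}(t)=[e^{Ht}]_{ij}$ and let $d_{ij}$ be the graph distance between vertices $i$ and $j$. Then for all vertices $i,j$ with $d_{ij}\ge1$ and all $0\le t<d_{ij}/(\lambda h e)$, $$G_{ij}(t)\le\left(\frac{\lambda h t e}{d_{ij}}\right)^{d_{ij}}\frac{1/e}{1-\lambda h t e/d_{ij}}.$$ *)

From HB Require Import structures.
From mathcomp Require Import all_boot all_order all_algebra.
From mathcomp Require Import all_classical all_reals all_analysis.
Set Implicit Arguments. Unset Strict Implicit. Unset Printing Implicit Defensive.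
Import Order.TTheory GRing.Theory Num.Theory.
Local Open Scope ring_scope.

Definition simple_graph (n : nat) (e : rel 'I_n) : Prop :=
  symmetric e /\ irreflexive e.

Definition degree (n : nat) (e : rel 'I_n) (i : 'I_n) : nat :=
  #|[set j | e i j]|.

Definition walk_of_length (n : nat) (e : rel 'I_n) (k : nat) (i j : 'I_n) : Prop :=
  exists p : seq 'I_n, [/\ size p = k, path e i p & last i p = j].

Definition graph_dist (n : nat) (e : rel 'I_n) (i j : 'I_n) (d : nat) : Prop :=
  walk_of_length e d i j /\ (forall k, (k < d)%N -> ~ walk_of_length e k i j).

Definition expmx_entry (R : realType) (n : nat) (H : 'M[R]_n) (t : R)
    (i j : 'I_n) : R :=
  limn (fun N : nat => \sum_(k < N) (t ^+ k / (k`!)%:R) * (H ^+ k) i j).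

From HB Require Import structures.
From mathcomp Require Import all_boot all_order all_algebra.
From mathcomp Require Import all_classical all_reals all_analysis.
From mathcomp Require Import ring.
Set Implicit Arguments. Unset Strict Implicit. Unset Printing Implicit Defensive.
Import Order.TTheory GRing.Theory Num.Theory.
Local Open Scope ring_scope.

(* Since H vanishes off the edges, (H^k)_ij = 0 for every k < d_ij, and since
   its row sums are at most lam h, (H^k)_ij <= (lam h)^k.  The Stirling-type
   bound k! >= k^k e^(1-k) together with k >= d_ij makes the k-th term of the
   exponential series at most e^-1 (lam h t e / d_ij)^k, and the geometric
   tail starting at k = d_ij sums to the claimed bound. *)

Section ExpBounds.
Variable R : realType.

Lemma pow_1Dinv_le_expR1 (k : nat) : (1 + (k%:R : R)^-1) ^+ k <= expR 1.
Proof.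
apply: le_trans (_ : expR (k%:R^-1) ^+ k <= _).
  by rewrite lerXn2r ?nnegrE ?expR_ge0 ?addr_ge0 ?invr_ge0 // expR_ge1Dx.
rewrite -expRM_natl ler_expR; case: k => [|k]; first by rewrite mul0r.
by rewrite mulfV ?pnatr_eq0.
Qed.

Lemma natr_pow_le_fact_expR (k : nat) :
  (k.+1%:R : R) ^+ k.+1 <= k.+1`!%:R * expR 1 ^+ k.
Proof.
elim: k => [|k IHk]; first by rewrite expr1 expr0 mulr1.
have -> : (k.+2%:R : R) ^+ k.+2 = k.+2%:R * (k.+1%:R ^+ k.+1 * (1 + k.+1%:R^-1) ^+ k.+1).
  by rewrite -exprMn mulrDr mulr1 mulfV ?pnatr_eq0 // -natr1 -exprS.
rewrite factS natrM -mulrA ler_wpM2l // [expR 1 ^+ _]exprSr mulrA.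
by apply: ler_pM; rewrite ?exprn_ge0 ?addr_ge0 ?invr_ge0 // pow_1Dinv_le_expR1.
Qed.

Lemma exp_series_term_le (x : R) (d k : nat) : 0 <= x -> (0 < d <= k)%N ->
  x ^+ k / k`!%:R <= (expR 1)^-1 * (x * expR 1 / d%:R) ^+ k.
Proof.
move=> x_ge0 /andP[d_gt0 le_dk].
have e_gt0 : (0 : R) < expR 1 := expR_gt0 1.
apply: le_trans (_ : _ <= (expR 1)^-1 * (x * expR 1 / k%:R) ^+ k) _; last first.
  apply: ler_wpM2l; first by rewrite invr_ge0 expR_ge0.
  rewrite lerXn2r ?nnegrE ?divr_ge0 ?mulr_ge0 ?ler0n ?expR_ge0 //.
  apply: ler_wpM2l; first by rewrite mulr_ge0 ?expR_ge0.
  by rewrite lef_pV2 ?posrE ?ltr0n ?ler_nat // (leq_trans d_gt0).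
case: k le_dk => [|k] le_dk; first by move: (leq_trans d_gt0 le_dk).
have k_gt0 : (0 : R) < k.+1%:R by rewrite ltr0n.
rewrite [leRHS](_ : _ = x ^+ k.+1 * (expR 1 ^+ k / k.+1%:R ^+ k.+1)); last first.
  by rewrite !exprMn exprVn [expR 1 ^+ k.+1]exprS; field; rewrite !gt_eqF ?exprn_gt0.
apply: ler_wpM2l; first exact: exprn_ge0.
rewrite ler_pdivlMr ?exprn_gt0 // mulrC ler_pdivrMr ?ltr0n ?fact_gt0 // mulrC.
exact: natr_pow_le_fact_expR.
Qed.
End ExpBounds.

Lemma geometric_sum_le (R : numFieldType) (r : R) (m : nat) :
  0 <= r -> r < 1 -> \sum_(k < m) r ^+ k <= (1 - r)^-1.
Proof.
move=> r_ge0 r_lt1; have r_gap : 0 < 1 - r by rewrite subr_gt0.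
have geom : (1 - r) * \sum_(k < m) r ^+ k = 1 - r ^+ m.
  by apply: oppr_inj; rewrite -mulNr !opprB subrX1.
rewrite -(ler_pM2l r_gap) geom mulfV ?gt_eqF // gerBl.
exact: exprn_ge0.
Qed.

Section SeriesTail.
Variable R : realType.

Lemma limn_sum_le_geometric_tail (u : nat -> R) (c r : R) (d : nat) :
  0 <= r -> r < 1 -> (forall k, 0 <= u k) ->
  (forall k, (k < d)%N -> u k = 0) ->
  (forall k, (d <= k)%N -> u k <= c * r ^+ k) ->
  limn (fun N => \sum_(k < N) u k) <= c * r ^+ d / (1 - r).
Proof.
move=> r_ge0 r_lt1 u_ge0 u_head u_tail.
set S := fun N => \sum_(k < N) u k.
have S_nd : nondecreasing_seq S.
  by apply/nondecreasing_seqP => N; rewrite /S big_ord_recr lerDl.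
have S_le N : S N <= c * r ^+ d / (1 - r).
  apply: le_trans (S_nd _ _ (leq_addl d N)) _.
  rewrite /S big_split_ord /= big1 ?add0r => [|k _]; last exact: u_head.
  apply: le_trans (_ : _ <= \sum_(k < N) c * r ^+ (d + k)) _.
    by apply: ler_sum => k _; rewrite u_tail ?leq_addr.
  under eq_bigr do rewrite exprD mulrA.
  rewrite -mulr_sumr; apply: ler_wpM2l; last exact: geometric_sum_le.
  by rewrite (le_trans (u_ge0 d)) ?u_tail.
apply: limr_le; last exact: nearW.
by apply: nondecreasing_is_cvgn => //; exists (c * r ^+ d / (1 - r)) => _ [N _ <-].
Qed.
End SeriesTail.

Section MatrixPowers.
Variables (R : numDomainType) (n : nat) (H : 'M[R]_n).

Lemma mx_pow_eq0_no_walk (e : rel 'I_n) :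
  (forall i j, ~~ e i j -> H i j = 0) ->
  forall k i j, ~ walk_of_length e k i j -> (H ^+ k) i j = 0.
Proof.
move=> H_off; elim=> [|k IHk] i j no_walk.
  by rewrite expr0 mxE; case: eqVneq => // eq_ij; case: no_walk; exists [::].
rewrite exprS -mulmxE mxE big1 // => l _.
have [e_il | /H_off ->] := boolP (e i l); last by rewrite mul0r.
rewrite IHk ?mulr0 // => -[p [size_p path_p last_p]].
by case: no_walk; exists (l :: p); rewrite /= size_p e_il.
Qed.

Lemma row_sum_le_degree (e : rel 'I_n) (h : R) :
  (forall i j, ~~ e i j -> H i j = 0) -> (forall i j, e i j -> H i j <= h) ->
  forall i, \sum_l H i l <= (degree e i)%:R * h.
Proof.
move=> H_off H_le_h i.
rewrite (bigID (e i)) /= [X in _ + X]big1 ?addr0 => [|l /H_off //].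
rewrite /degree cardsE mulr_natl -sumr_const.
by apply: ler_sum => l /H_le_h.
Qed.

Hypothesis H_ge0 : forall i j, 0 <= H i j.

Lemma mx_pow_ge0 k i j : 0 <= (H ^+ k) i j.
Proof.
elim: k i j => [|k IHk] i j; first by rewrite expr0 mxE ler0n.
by rewrite exprS -mulmxE mxE sumr_ge0 // => l _; rewrite mulr_ge0.
Qed.

Lemma mx_pow_le_row_sum (a : R) :
  (forall i, \sum_l H i l <= a) -> forall k i j, (H ^+ k) i j <= a ^+ k.
Proof.
move=> row_le; elim=> [|k IHk] i j.
  by rewrite expr0 mxE expr0 lern1 leq_b1.
rewrite exprS -mulmxE mxE [a ^+ _]exprS.
apply: le_trans (_ : _ <= \sum_l H i l * a ^+ k) _.
  by apply: ler_sum => l _; rewrite ler_wpM2l.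
by rewrite -mulr_suml ler_wpM2r ?(le_trans (mx_pow_ge0 k i j)).
Qed.
End MatrixPowers.

Theorem mainTheorem3 (R : realType) (n : nat) (e : rel 'I_n)
  (H : 'M[R]_n) (h : R) (lam : nat) :
  simple_graph e ->
  (forall i j, 0 <= H i j) ->
  (forall i j, ~~ e i j -> H i j = 0) ->
  (forall i j, e i j -> H i j <= h) ->
  (forall i, (degree e i <= lam)%N) ->
  forall (i j : 'I_n) (d : nat) (t : R),
    graph_dist e i j d -> (1 <= d)%N ->
    0 <= t -> t < d%:R / (lam%:R * h * expR 1) ->
    expmx_entry H t i j <=
      (lam%:R * h * t * expR 1 / d%:R) ^+ d
      * ((expR 1)^-1 / (1 - lam%:R * h * t * expR 1 / d%:R)).
Proof.
move=> _ H_ge0 H_off H_le_h deg_le i j d t [_ no_short] d_ge1 t_ge0 t_lt.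
set a := lam%:R * h; set r := a * t * expR 1 / d%:R.
have d_gt0 : (0 : R) < d%:R by rewrite ltr0n.
(* Also covers [lam * h = 0], where [d / 0 = 0] makes the bound on [t] void. *)
have aE_gt0 : 0 < a * expR 1.
  by move: (le_lt_trans t_ge0 t_lt); rewrite pmulr_rgt0 // invr_gt0.
have a_gt0 : 0 < a by rewrite -(pmulr_lgt0 _ (expR_gt0 1)).
have h_ge0 : 0 <= h.
  by rewrite leNgt; apply/negP => /ltW h_le0; move: a_gt0; rewrite ltNge mulr_ge0_le0.
have r_ge0 : 0 <= r by rewrite divr_ge0 ?mulr_ge0 ?expR_ge0 ?(ltW a_gt0) ?ler0n.
have r_lt1 : r < 1.
  by rewrite ltr_pdivrMr // mul1r mulrAC; move: t_lt; rewrite -/a ltr_pdivlMr // mulrC.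
have row_le i' : \sum_l H i' l <= a.
  by rewrite (le_trans (row_sum_le_degree H_off H_le_h i')) ?ler_wpM2r ?ler_nat ?deg_le.
rewrite /expmx_entry mulrA [_ * (expR 1)^-1]mulrC.
apply: (limn_sum_le_geometric_tail (u := fun k => t ^+ k / k`!%:R * (H ^+ k) i j))
  => // k.
- by rewrite mulr_ge0 ?divr_ge0 ?exprn_ge0 ?mx_pow_ge0.
- by move=> k_lt_d; rewrite (mx_pow_eq0_no_walk H_off) ?mulr0 //; apply: no_short.
- move=> le_dk; apply: le_trans (exp_series_term_le (mulr_ge0 (ltW a_gt0) t_ge0) _).
    rewrite exprMn [a ^+ k * _]mulrC [leRHS]mulrAC.
    by apply: ler_wpM2l; rewrite ?divr_ge0 ?exprn_ge0 ?mx_pow_le_row_sum.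
  by rewrite d_ge1.
Qed.
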